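(* Consider a single-core non-preemptive server of capacity $f>0$ and tasks $1,\dots,N$, all available at time $0$, task $a$ requiring $\alpha_a$ CPU cycles with deadline $\beta_a$. Let $\mathbf{s}$ be an optimal ordered set without any outages, of size $M$, and let $\mathbf{s}'$ be the ordered set, of size $P$, produced by the Optimal Job Scheduling algorithm; $\mathbf{s}'$ has no outages. Then $\mathbf{s}'$ is an optimal ordered set and $P=M$.
   Context: An ordered set is a sequence of distinct tasks executed back-to-back from time $0$; the task in position $l$ completes at $\frac1f\sum_{k=1}^{l}\alpha_{s(k)}$ and is in outage if this exceeds its deadline. An optimal ordered set is an ordered set with no outage of maximum cardinality. Optimal Job Scheduling algorithm: let $\mathbf{c}=[c(1),\dots,c(N)]$ be the ordering of $[1:N]$ by nondecreasing $\alpha$ (ties broken by nonincreasing $\beta$) and $\mathbf{b}=[b(1),\dots,b(N)]$ the ordering of $[1:N]$ by nondecreasing $\beta$ (ties broken by nondecreasing $\alpha$). Initialize $\mathbf{q}=[q(1),\dots,q(N)]=\mathbf 0$ (entry $0$ denotes an empty slot, with $\alpha_0=0$). For $i=1,\dots,N$: find $i^*$ with $b(i^* )=c(i)$ and set $q(i^* )\gets b(i^* )$; if for some $j\in[i^*:N]$ with $q(j)\neq0$ we have $\sum_{k=1}^{j}\alpha_{q(k)}/f>\beta_{q(j)}$, reset $q(i^* )\gets0$. The output $\mathbf{s}'$ is the sequence of nonzero entries of $\mathbf{q}$ in order, of length $P$. *)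

From mathcomp Require Import all_boot all_order all_algebra.
Set Implicit Arguments. Unset Strict Implicit. Unset Printing Implicit Defensive.
Import Order.TTheory GRing.Theory Num.Theory.
Local Open Scope ring_scope.

(* Tasks are the natural numbers 1..N; 0 denotes an empty slot. *)

Section Sched.
Variable R : realFieldType.
Variables (N : nat) (f : R) (alpha beta : nat -> R).

Definition is_ordered_set (s : seq nat) : bool :=
  uniq s && all (fun a => (0 < a <= N)%N) s.

(* Completion time of the task in (0-based) position l of s. *)
Definition completion (s : seq nat) (l : nat) : R :=
  (\sum_(k < l.+1) alpha (nth 0%N s k)) / f.

Definition no_outage (s : seq nat) : Prop :=
  forall l, (l < size s)%N -> completion s l <= beta (nth 0%N s l).

Definition optimal_ordered_set (s : seq nat) : Prop :=
  [/\ is_ordered_set s, no_outage s &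
      forall t, is_ordered_set t -> no_outage t -> (size t <= size s)%N].

(* alpha extended with alpha_0 = 0 for empty slots. *)
Definition alphaz (k : nat) : R := if k == 0%N then 0 else alpha k.

(* One iteration of the Optimal Job Scheduling algorithm, inserting task x
   (= c(i)) at the position i* of x in b (0-based here). *)
Definition ojs_step (b : seq nat) (q : seq nat) (x : nat) : seq nat :=
  let istar := index x b in
  let q' := set_nth 0%N q istar x in
  if [exists j : 'I_N, [&& (istar <= j)%N, nth 0%N q' j != 0%N &
        beta (nth 0%N q' j) < (\sum_(k < j.+1) alphaz (nth 0%N q' k)) / f]]
  then q else q'.

Definition ojs (c b : seq nat) : seq nat :=
  [seq k <- foldl (ojs_step b) (nseq N 0%N) c | k != 0%N].

Definition c_order (x y : nat) : bool :=
  (alpha x < alpha y) || ((alpha x == alpha y) && (beta y <= beta x)).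

Definition b_order (x y : nat) : bool :=
  (beta x < beta y) || ((beta x == beta y) && (alpha x <= alpha y)).

End Sched.

From mathcomp Require Import all_boot all_order all_algebra.
Set Implicit Arguments. Unset Strict Implicit. Unset Printing Implicit Defensive.
Import Order.TTheory GRing.Theory Num.Theory.
Local Open Scope ring_scope.

(* Call a set of tasks EDF-feasible if running it in the deadline order b causes no outage.
   By the exchange argument for earliest-deadline-first, the tasks of every ordered set
   without outage form an EDF-feasible set.  The vector q of the algorithm always holds an
   EDF-feasible set in its deadline slots, and the task c(i) is kept iff the enlarged set is
   still EDF-feasible, so the output is the greedy set for the order c of nondecreasing
   processing times.  The greedy set has maximum size: if a feasible set T agrees with it on
   c(1), ..., c(i) but not on s = c(i+1), then s was accepted by the greedy algorithm, and
   replacing by s the first task of T (in deadline order) that comes after s in c, or adding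
   s when there is none, keeps T feasible, makes it agree on c(i+1) too, and does not shrink
   it. *)

Lemma big_ord_take (R : Type) (idx : R) (op : R -> R -> R) (T : Type) (x0 : T)
    (s : seq T) (n : nat) (F : T -> R) :
  (n <= size s)%N ->
  \big[op/idx]_(k < n) F (nth x0 s k) = \big[op/idx]_(y <- take n s) F y.
Proof.
move=> le_ns; rewrite (big_nth x0) size_takel // big_mkord.
by apply: eq_bigr => k _; rewrite nth_take.
Qed.

Lemma take_filter_nth (T : Type) (x0 : T) (P : pred T) (s : seq T) (l : nat) :
  (l < size [seq y <- s | P y])%N ->
  exists2 p, (p < size s)%N &
    nth x0 s p = nth x0 [seq y <- s | P y] l /\
    take l.+1 [seq y <- s | P y] = [seq y <- take p.+1 s | P y].
Proof.
elim: s l => [|y s IH] l //=; case: ifP => Py /=.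
- case: l => [|l] lt_l; first by exists 0%N => //; rewrite !take0.
  have [p ltp [nth_p take_p]] := IH l lt_l.
  by exists p.+1; rewrite //= take_p.
- move=> /IH[p ltp [nth_p take_p]].
  by exists p.+1.
Qed.

Lemma ler_sum_subset (R : numDomainType) (I : eqType) (u v : seq I) (F : I -> R) :
  uniq u -> uniq v -> {subset u <= v} -> {in v, forall y, 0 <= F y} ->
  \sum_(y <- u) F y <= \sum_(y <- v) F y.
Proof.
move=> u_uniq v_uniq uv F_ge0.
have perm_u : perm_eq [seq y <- v | y \in u] u.
  apply: uniq_perm; rewrite ?filter_uniq // => y.
  by rewrite mem_filter andb_idr //; apply: uv.
rewrite -(perm_big _ perm_u) big_filter [leRHS](bigID (mem u)) /= lerDl.
by rewrite big_seq_cond sumr_ge0 // => y /andP[/F_ge0].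
Qed.

Lemma count_predU1 (T : eqType) (P : pred T) (y : T) (s : seq T) :
  uniq s -> y \in s -> ~~ P y -> count (predU1 y P) s = (count P s).+1.
Proof.
move=> s_uniq ys Py; rewrite !(permP (perm_to_rem ys)) /= eqxx (negbTE Py).
congr _.+1; apply: eq_in_count => z.
by rewrite mem_rem_uniq // => /andP[/negbTE /= ->].
Qed.

Lemma count_swap (T : eqType) (P : pred T) (y u : T) (s : seq T) :
  uniq s -> y \in s -> u \in s -> ~~ P y -> P u ->
  count (predU1 y (predD1 P u)) s = count P s.
Proof.
move=> s_uniq ys us Py Pu; rewrite count_predU1 //=; last by rewrite (negbTE Py) andbF.
rewrite -(@count_predU1 _ (predD1 P u) u) //= ?eqxx //.
by apply: eq_count => z /=; case: eqP => [->|].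
Qed.

Lemma sorted_key_nth_le (T : Type) (R : numDomainType) (key : T -> R) (x0 : T)
    (s : seq T) (i j : nat) :
  sorted (relpre key <=%R) s -> (i <= j)%N -> (j < size s)%N ->
  key (nth x0 s i) <= key (nth x0 s j).
Proof.
move=> s_sorted le_ij lt_js.
apply: (sorted_leq_nth _ _ x0 s_sorted); rewrite ?inE //.
- by move=> y x z /= /le_trans; apply.
- by move=> x /=.
- exact: leq_ltn_trans le_ij lt_js.
Qed.

Section EDF.
Variables (R : realFieldType) (N : nat) (f : R) (alpha beta : nat -> R) (b : seq nat).
Hypothesis f_gt0 : 0 < f.
Hypothesis alpha_gt0 : forall a, (0 < a <= N)%N -> 0 < alpha a.
Hypothesis b_perm : perm_eq b (iota 1 N).
Hypothesis b_sorted : sorted (relpre beta <=%R) b.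
Implicit Types P Q : pred nat.

Lemma size_b : size b = N.
Proof. by rewrite (perm_size b_perm) size_iota. Qed.

Lemma uniq_b : uniq b.
Proof. by rewrite (perm_uniq b_perm) iota_uniq. Qed.

Lemma mem_b z : (z \in b) = (0 < z <= N)%N.
Proof. by rewrite (perm_mem b_perm) mem_iota add1n ltnS. Qed.

Lemma nth_b_mem k : (k < N)%N -> nth 0%N b k \in b.
Proof. by move=> ltkN; rewrite mem_nth ?size_b. Qed.

Lemma nth_b_mem_take k : (k < N)%N -> nth 0%N b k \in take k.+1 b.
Proof. by move=> ltkN; rewrite in_take ?nth_b_mem // index_uniq ?size_b ?uniq_b. Qed.

Lemma alpha_b_gt0 z : z \in b -> 0 < alpha z.
Proof. by rewrite mem_b => /alpha_gt0. Qed.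

Lemma beta_nth_b_le i j : (i <= j)%N -> (j < N)%N ->
  beta (nth 0%N b i) <= beta (nth 0%N b j).
Proof. by rewrite -size_b; apply: sorted_key_nth_le. Qed.

Definition load (P : pred nat) (p : nat) : R := \sum_(z <- take p.+1 b | P z) alpha z.

Definition edf_feasible (P : pred nat) : bool :=
  [forall p : 'I_N, P (nth 0%N b p) ==> (load P p / f <= beta (nth 0%N b p))].

Lemma edf_feasibleP P :
  reflect (forall p, (p < N)%N -> P (nth 0%N b p) -> load P p / f <= beta (nth 0%N b p))
          (edf_feasible P).
Proof.
apply: (iffP forallP) => [feasP p ltpN Pp | feasP p].
  by have /implyP := feasP (Ordinal ltpN); apply.
by apply/implyP; apply: feasP.
Qed.

Lemma load_le P Q p : {in take p.+1 b, subpred P Q} -> load P p <= load Q p.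
Proof.
move=> PQ; rewrite /load big_seq_cond [leRHS]big_seq_cond big_mkcond [leRHS]big_mkcond.
apply: ler_sum => z; case: (boolP (z \in _)) => //= zb.
case: ifP => [/(PQ _ zb) -> // | _]; case: ifP => // _.
by rewrite ltW // alpha_b_gt0 // (mem_take zb).
Qed.

Lemma load_predU1 P y p : ~~ P y -> y \in take p.+1 b ->
  load (predU1 y P) p = alpha y + load P p.
Proof.
move=> Py yb; rewrite /load -big_filter (bigD1_seq y) ?filter_uniq ?take_uniq ?uniq_b //=.
  rewrite big_filter_cond; congr (_ + _); apply: eq_bigl => z /=.
  by case: eqP => [->|_]; rewrite /= ?(negbTE Py) ?andbT.
by rewrite mem_filter /= eqxx.
Qed.

Lemma load_predD1 P y p : P y -> y \in take p.+1 b ->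
  load P p = alpha y + load (predD1 P y) p.
Proof.
move=> Py yb; rewrite /load -big_filter (bigD1_seq y) ?filter_uniq ?take_uniq ?uniq_b //=.
  by rewrite big_filter_cond; congr (_ + _); apply: eq_bigl => z /=; rewrite andbC.
by rewrite mem_filter Py.
Qed.

Lemma load_predU1_le P y p : y \in b -> load (predU1 y P) p <= alpha y + load P p.
Proof.
move=> yb; have alpha_y_ge0 := ltW (alpha_b_gt0 yb).
case: (boolP (y \in take p.+1 b)) => [yp|yNp]; first case: (boolP (P y)) => [Py|Py].
- by apply: ler_wpDl => //; apply: load_le => z _ /predU1P[->|].
- by rewrite load_predU1.
- apply: ler_wpDl => //; apply: load_le => z zp /predU1P[ezy|] //.
  by rewrite -ezy zp in yNp.
Qed.

Lemma load_le_beta P k p : edf_feasible P -> (k <= p)%N -> (p < N)%N ->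
  P (nth 0%N b k) -> load P p / f <= beta (nth 0%N b p).
Proof.
move=> /edf_feasibleP feasP le_kp ltpN Pk; elim: p le_kp ltpN => [|p IH].
  by rewrite leqn0 => /eqP ek ltkN; subst k; apply: feasP.
rewrite leq_eqVlt => /predU1P[<- | lt_kp] ltpN; first exact: feasP.
case Pp: (P (nth 0%N b p.+1)); first exact: feasP.
rewrite /load (take_nth 0%N) ?size_b // big_rcons /= Pp addr0.
by apply: le_trans (IH lt_kp (ltnW ltpN)) _; apply: beta_nth_b_le.
Qed.

Lemma edf_feasible_sub P Q : {in b, subpred P Q} -> edf_feasible Q -> edf_feasible P.
Proof.
move=> PQ /edf_feasibleP feasQ; apply/edf_feasibleP => p ltpN Pp.
apply: le_trans (feasQ p ltpN (PQ _ (nth_b_mem ltpN) Pp)).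
by rewrite ler_pM2r ?invr_gt0 //; apply: load_le => z /mem_take; apply: PQ.
Qed.

Lemma edf_feasible_swap T s u :
  edf_feasible T -> T u -> s \in b -> u \in b -> alpha s <= alpha u ->
  (forall p, (p < index u b)%N -> predU1 s T (nth 0%N b p) ->
     load (predU1 s T) p / f <= beta (nth 0%N b p)) ->
  edf_feasible (predU1 s (predD1 T u)).
Proof.
move=> feasT Tu sb ub le_su before_u; apply/edf_feasibleP => p ltpN T'p.
have T'_sub z : predU1 s (predD1 T u) z -> predU1 s T z.
  by case/predU1P=> [->|/andP[_ Tz]]; rewrite /= ?eqxx ?Tz ?orbT.
case: (ltnP p (index u b)) => [lt_pu | le_up].
  apply: le_trans (before_u p lt_pu (T'_sub _ T'p)).
  by rewrite ler_pM2r ?invr_gt0 //; apply: load_le => z _; apply: T'_sub.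
have up : u \in take p.+1 b by rewrite in_take.
apply: le_trans (load_le_beta feasT le_up ltpN _); last by rewrite nth_index.
rewrite ler_pM2r ?invr_gt0 // (load_predD1 Tu up).
by apply: le_trans (load_predU1_le _ _ sb) _; rewrite lerD2r.
Qed.

(* This is why the algorithm only tests the positions j >= i*. *)
Lemma edf_violation_after P x p : edf_feasible P -> (p < N)%N ->
  predU1 x P (nth 0%N b p) -> beta (nth 0%N b p) < load (predU1 x P) p / f ->
  (index x b <= p)%N.
Proof.
move=> /edf_feasibleP feasP ltpN xPp; rewrite ltNge; apply: contraNleq => lt_px.
have xNp : x \notin take p.+1 b.
  by apply: contraL lt_px => xp; rewrite -leqNgt -ltnS -in_take ?(mem_take xp).
have Pp : P (nth 0%N b p).
  by case/predU1P: xPp => // ex; rewrite -ex nth_b_mem_take in xNp.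
apply: le_trans (feasP p ltpN Pp); rewrite ler_pM2r ?invr_gt0 //.
by apply: load_le => z zp /predU1P[ezx|] //; rewrite -ezx zp in xNp.
Qed.

Lemma edf_optimal s : is_ordered_set N s -> no_outage f alpha beta s ->
  edf_feasible (mem s).
Proof.
move=> /andP[s_uniq s_range] s_noout; apply/edf_feasibleP => p ltpN sp.
set K := [seq y <- take p.+1 b | y \in s].
pose inK n := (n < size s)%N && (nth 0%N s n \in K).
have inK_index y : y \in K -> inK (index y s).
  move=> yK; have ys : y \in s by move: yK; rewrite mem_filter => /andP[].
  by rewrite /inK index_mem ys nth_index.
have exK : exists n, inK n.
  by exists (index (nth 0%N b p) s); rewrite inK_index // mem_filter nth_b_mem_take ?andbT.
have inK_le n : inK n -> (n <= size s)%N by case/andP => /ltnW.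
(* s_l is the last task of s among the first p+1 tasks of b, so all of those are done by
   the completion time of s_l. *)
have [l /andP[lt_ls lK] l_max] := ex_maxnP exK inK_le.
set m := nth 0%N s l in lK.
have [ms mp] : m \in s /\ m \in take p.+1 b by move: lK; rewrite mem_filter => /andP[].
have le_mp : (index m b <= p)%N by rewrite -ltnS -in_take ?(mem_take mp).
apply: le_trans (beta_nth_b_le le_mp ltpN); rewrite (nth_index 0%N (mem_take mp)).
apply: le_trans (s_noout l lt_ls); rewrite /completion ler_pM2r ?invr_gt0 //.
rewrite /load -big_filter -/K big_ord_take //; apply: ler_sum_subset.
- by rewrite filter_uniq // take_uniq // uniq_b.
- by rewrite take_uniq.
- move=> y yK; have ys : y \in s by move: yK; rewrite mem_filter => /andP[].
  by rewrite in_take // ltnS l_max // inK_index.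
- by move=> y /mem_take ys; apply/ltW/alpha_gt0; move/allP: s_range; apply.
Qed.

Lemma count_mem_ordered_set s : is_ordered_set N s -> count (mem s) b = size s.
Proof.
move=> /andP[s_uniq s_range]; rewrite -size_filter; apply: perm_size.
apply: uniq_perm; rewrite ?filter_uniq ?uniq_b // => y.
rewrite mem_filter andb_idr // => ys; rewrite mem_b.
by move/allP: s_range; apply.
Qed.

Lemma ordered_set_filter P : is_ordered_set N [seq z <- b | P z].
Proof.
rewrite /is_ordered_set filter_uniq ?uniq_b //=.
by apply/allP => z; rewrite mem_filter -mem_b => /andP[].
Qed.

Lemma no_outage_filter P : edf_feasible P -> no_outage f alpha beta [seq z <- b | P z].
Proof.
move=> /edf_feasibleP feasP l lt_l.
have [p ltp [nth_p take_p]] := take_filter_nth 0%N lt_l.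
have Pp : P (nth 0%N b p) by rewrite nth_p; have := mem_nth 0%N lt_l; rewrite mem_filter => /andP[].
rewrite -nth_p /completion big_ord_take // take_p big_filter.
by rewrite size_b in ltp; apply: feasP.
Qed.

Definition greedy_step P x : pred nat :=
  if edf_feasible (predU1 x P) then (predU1 x P : pred nat) else P.

(* The vector q of the algorithm once it has scheduled exactly the tasks of P. *)
Definition slots P : seq nat := [seq if P z then z else 0%N | z <- b].

Lemma nth_slots P k : (k < N)%N ->
  nth 0%N (slots P) k = if P (nth 0%N b k) then nth 0%N b k else 0%N.
Proof. by move=> ltkN; rewrite (nth_map 0%N) ?size_b. Qed.

Lemma slots_pred0 : slots pred0 = nseq N 0%N.
Proof.
apply: (@eq_from_nth _ 0%N) => [|k]; first by rewrite size_map size_nseq size_b.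
by rewrite size_map size_b => ltkN; rewrite nth_slots // nth_nseq ltkN.
Qed.

Lemma set_nth_slots P x : x \in b ->
  set_nth 0%N (slots P) (index x b) x = slots (predU1 x P).
Proof.
move=> xb; have ltxN : (index x b < N)%N by rewrite -size_b index_mem.
apply: (@eq_from_nth _ 0%N) => [|k].
  by rewrite size_set_nth !size_map size_b (maxn_idPr ltxN).
rewrite size_set_nth size_map size_b (maxn_idPr ltxN) => ltkN.
rewrite nth_set_nth /= !nth_slots //=.
have [->|neq_kx] := eqVneq k (index x b); first by rewrite nth_index // eqxx.
case: eqP => [bkx|_] //.
by rewrite -bkx index_uniq ?size_b ?uniq_b ?eqxx in neq_kx.
Qed.

Lemma sum_alphaz_slots P j : (j < N)%N ->
  \sum_(k < j.+1) alphaz alpha (nth 0%N (slots P) k) = load P j.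
Proof.
move=> ltjN; rewrite /load /slots big_ord_take ?size_map ?size_b //.
rewrite -map_take big_map [RHS]big_mkcond; apply: eq_big_seq => z /mem_take zb.
have zn0 : z != 0%N by move: zb; rewrite mem_b; case: z.
by rewrite /alphaz; case: (P z); rewrite ?eqxx ?(negbTE zn0).
Qed.

Lemma ojs_step_slots P x : edf_feasible P -> x \in b ->
  ojs_step N f alpha beta b (slots P) x = slots (greedy_step P x).
Proof.
move=> feasP xb; rewrite /ojs_step set_nth_slots // /greedy_step.
set Q := predU1 x P.
suff -> : [exists j : 'I_N, [&& (index x b <= j)%N, nth 0%N (slots Q) j != 0%N &
    beta (nth 0%N (slots Q) j) < (\sum_(k < j.+1) alphaz alpha (nth 0%N (slots Q) k)) / f]]
    = ~~ edf_feasible Q by case: (edf_feasible Q).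
apply/idP/idP.
- case/existsP=> j /and3P[_]; rewrite nth_slots // sum_alphaz_slots //.
  case: ifP => // Qj _ viol; apply/negP => /edf_feasibleP feasQ.
  by have := feasQ j (ltn_ord j) Qj; rewrite leNgt viol.
- rewrite negb_forall => /existsP[p]; rewrite negb_imply -ltNge => /andP[Qp viol].
  apply/existsP; exists p; rewrite nth_slots // sum_alphaz_slots // Qp viol andbT.
  rewrite (edf_violation_after feasP (ltn_ord p) Qp viol) /=.
  by have := nth_b_mem (ltn_ord p); rewrite mem_b; case: (nth _ _ _).
Qed.

Lemma greedy_stepE P x z :
  greedy_step P x z = P z || (z == x) && edf_feasible (predU1 x P).
Proof. by rewrite /greedy_step; case: ifP; rewrite /= ?andbT ?andbF ?orbF // orbC. Qed.

Lemma edf_feasible_pred0 : edf_feasible pred0.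
Proof. by apply/edf_feasibleP. Qed.

Lemma greedy_step_feasible P x : edf_feasible P -> edf_feasible (greedy_step P x).
Proof. by rewrite /greedy_step; case: ifP. Qed.

Lemma foldl_greedy_step_feasible P xs :
  edf_feasible P -> edf_feasible (foldl greedy_step P xs).
Proof. by elim: xs P => [|x xs IH] P //= /(greedy_step_feasible x); apply: IH. Qed.

Lemma foldl_greedy_step_le P xs z : P z -> foldl greedy_step P xs z.
Proof. by elim: xs P => [|x xs IH] P //= Pz; apply: IH; rewrite greedy_stepE Pz. Qed.

Lemma foldl_greedy_step_new P xs z : foldl greedy_step P xs z -> P z || (z \in xs).
Proof.
elim: xs P => [|x xs IH] P /=; first by rewrite orbF.
move=> /IH; rewrite greedy_stepE in_cons.
by case: (P z) => //=; case: (z == x).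
Qed.

Lemma foldl_ojs_step P xs : edf_feasible P -> {subset xs <= b} ->
  foldl (ojs_step N f alpha beta b) (slots P) xs = slots (foldl greedy_step P xs).
Proof.
elim: xs P => [|x xs IH] P //= feasP xsb.
rewrite ojs_step_slots ?xsb ?mem_head // IH ?greedy_step_feasible // => z zxs.
by apply: xsb; rewrite in_cons zxs orbT.
Qed.

Lemma filter_slots P : [seq k <- slots P | k != 0%N] = [seq z <- b | P z].
Proof.
have : 0%N \notin b by rewrite mem_b.
rewrite /slots; elim: b => //= z s IH; rewrite in_cons negb_or => /andP[z0 s0].
by case: (P z); rewrite /= (IH s0) // eq_sym z0.
Qed.

Section Greedy.
Variable c : seq nat.
Hypothesis c_perm : perm_eq c b.
Hypothesis c_sorted : sorted (relpre alpha <=%R) c.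

Definition greedy k : pred nat := foldl greedy_step pred0 (take k c).

Local Notation G := (greedy N).

Lemma size_c : size c = N.
Proof. by rewrite (perm_size c_perm) size_b. Qed.

Lemma nth_c_mem_take i k : (i < N)%N -> (nth 0%N c i \in take k c) = (i < k)%N.
Proof.
move=> ltiN; have uniq_c : uniq c by rewrite (perm_uniq c_perm) uniq_b.
by rewrite in_take ?mem_nth ?size_c // index_uniq ?size_c.
Qed.

Lemma greedy_feasible k : edf_feasible (greedy k).
Proof. exact/foldl_greedy_step_feasible/edf_feasible_pred0. Qed.

Lemma greedy_prefix k z : greedy k z = G z && (z \in take k c).
Proof.
have uniq_c : uniq c by rewrite (perm_uniq c_perm) uniq_b.
rewrite /greedy [in take N c]take_oversize ?size_c // -{2}(cat_take_drop k c) foldl_cat.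
case: (boolP (z \in take k c)) => [zk | zNk]; last first.
  by rewrite andbF; apply: contraNF zNk => /foldl_greedy_step_new.
have /hasPn disj : ~~ has (mem (take k c)) (drop k c).
  by move: uniq_c; rewrite -{1}(cat_take_drop k c) cat_uniq => /and3P[].
have zNd : z \notin drop k c by apply: contraL zk => /disj.
rewrite andbT; apply/idP/idP => [|/foldl_greedy_step_new]; first exact: foldl_greedy_step_le.
by rewrite (negbTE zNd) orbF.
Qed.

Lemma greedy_nth i : (i < N)%N ->
  G (nth 0%N c i) = edf_feasible (predU1 (nth 0%N c i) (greedy i)).
Proof.
move=> ltiN; set s := nth 0%N c i.
have -> : G s = greedy i.+1 s by rewrite (greedy_prefix i.+1) nth_c_mem_take // ltnSn andbT.
rewrite /greedy (take_nth 0%N) ?size_c // foldl_rcons greedy_stepE eqxx /=.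
by rewrite -/(greedy i) (greedy_prefix i) nth_c_mem_take // ltnn andbF.
Qed.

Lemma greedy_sub_agree i T : {in take i c, T =1 G} -> subpred (greedy i) T.
Proof. by move=> agree z; rewrite greedy_prefix => /andP[Gz zi]; rewrite agree. Qed.

Lemma greedy_before_first_new i T (a := [pred z | T z && (z \notin take i c)]) :
  {in take i c, T =1 G} -> {in take (find a b) b, subpred T (greedy i)}.
Proof.
move=> agree z zk Tz; have /hasPn before : ~~ has a (take (find a b) b).
  by apply/negP => /find_ltn; rewrite ltnn.
have := before z zk; rewrite /= Tz negbK => zi.
by rewrite greedy_prefix -agree ?Tz.
Qed.

(* T' swaps s for the first task u of T, in deadline order, that comes after s in c: before
   u, T + s is part of the feasible set (greedy i) + s, and from u on, s is shorter than u. *)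
Lemma greedy_exchange_accepted i T : (i < N)%N -> edf_feasible T ->
  {in take i c, T =1 G} -> ~~ T (nth 0%N c i) -> G (nth 0%N c i) ->
  exists2 T' : pred nat, edf_feasible T' &
    [/\ T' (nth 0%N c i), {in take i c, T' =1 T} & (count T b <= count T' b)%N].
Proof.
move=> ltiN feasT agree Ts Gs; set s := nth 0%N c i in Ts Gs *.
have sb : s \in b by rewrite -(perm_mem c_perm) mem_nth ?size_c.
have predU1_s P : {in take i c, predU1 s P =1 P}.
  by move=> z zi /=; case: eqP zi => // ->; rewrite nth_c_mem_take // ltnn.
set A := predU1 s (greedy i).
have feasA : edf_feasible A by rewrite -greedy_nth.
set ku := find [pred z | T z && (z \notin take i c)] b.
have sub_A : {in take ku b, subpred (predU1 s T) A}.
  move=> z zk /predU1P[-> | Tz]; first by rewrite /= eqxx.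
  by rewrite /= (greedy_before_first_new agree zk Tz) orbT.
case: (ltnP ku N) => [ltkuN | le_Nku]; last first.
  exists (predU1 s T).
    by apply: edf_feasible_sub feasA => z zb; apply: sub_A; rewrite take_oversize ?size_b.
  by split; [rewrite /= eqxx | exact: predU1_s | rewrite count_predU1 ?uniq_b].
set u := nth 0%N b ku.
have ub : u \in b := nth_b_mem ltkuN.
have /andP[Tu uNi] : T u && (u \notin take i c).
  by apply: (@nth_find _ 0%N [pred z | T z && (z \notin take i c)]); rewrite has_find size_b.
have le_su : alpha s <= alpha u.
  have uc : u \in c by rewrite (perm_mem c_perm).
  have le_iu : (i <= index u c)%N by move: uNi; rewrite in_take // -leqNgt.
  by rewrite -(nth_index 0%N uc) sorted_key_nth_le // index_mem.
exists (predU1 s (predD1 T u)); last split.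
- apply: edf_feasible_swap => //; rewrite index_uniq ?size_b ?uniq_b // => p lt_pku sTp.
  have ltpN := ltn_trans lt_pku ltkuN.
  have sub_p : {in take p.+1 b, subpred (predU1 s T) A}.
    by move=> z zp; apply: sub_A; apply: (@mem_take p.+1); rewrite take_takel.
  apply: le_trans (edf_feasibleP _ feasA p ltpN (sub_p _ (nth_b_mem_take ltpN) sTp)).
  by rewrite ler_pM2r ?invr_gt0 //; apply: load_le.
- by rewrite /= eqxx.
- move=> z zi; rewrite predU1_s //=; case: eqP zi => // ->.
  by rewrite (negbTE uNi).
- by rewrite count_swap ?uniq_b.
Qed.

Lemma greedy_exchange i T : (i < N)%N -> edf_feasible T -> {in take i c, T =1 G} ->
  exists2 T' : pred nat, edf_feasible T' &
    {in take i.+1 c, T' =1 G} /\ (count T b <= count T' b)%N.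
Proof.
move=> ltiN feasT agree; set s := nth 0%N c i.
have extend T' : T' s = G s -> {in take i c, T' =1 T} -> {in take i.+1 c, T' =1 G}.
  move=> T's T'T z; rewrite (take_nth 0%N) ?size_c // mem_rcons in_cons.
  by case/predU1P=> [-> | zi] //; rewrite T'T ?agree.
have [TsGs | ] := eqVneq (T s) (G s); first by exists T => //; split => //; apply: extend.
case Ts: (T s); case Gs: (G s) => // _.
- have /negP[] : ~~ G s by rewrite Gs.
  rewrite greedy_nth // (edf_feasible_sub _ feasT) // => z _.
  by case/predU1P=> [-> | /(greedy_sub_agree agree)].
- have [T' feasT' [T's T'T le_count]] :=
    greedy_exchange_accepted ltiN feasT agree (negbT Ts) Gs.
  by exists T' => //; split => //; apply: extend; rewrite ?T's ?Gs.
Qed.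

Lemma greedy_optimal T : edf_feasible T -> (count T b <= count G b)%N.
Proof.
suff agree_le k T' : (k <= N)%N -> edf_feasible T' -> {in take (N - k) c, T' =1 G} ->
    (count T' b <= count G b)%N.
  by move=> feasT; apply: (agree_le N) => //; rewrite subnn take0.
elim: k T' => [|k IH] T' le_kN feasT' agree.
  apply/eq_leq/eq_in_count => z zb; apply: agree.
  by rewrite subn0 take_oversize ?size_c // (perm_mem c_perm).
have ltN : (N - k.+1 < N)%N by rewrite ltn_subrL /= (leq_ltn_trans (leq0n k)).
have [T'' feasT'' [agree'' le_count]] := greedy_exchange ltN feasT' agree.
rewrite subnSK // in agree''.
exact: leq_trans le_count (IH _ (ltnW le_kN) feasT'' agree'').
Qed.

Lemma ojs_greedy : ojs N f alpha beta c b = [seq z <- b | G z].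
Proof.
rewrite /ojs -slots_pred0 foldl_ojs_step ?edf_feasible_pred0 //; last first.
  by move=> z; rewrite (perm_mem c_perm).
by rewrite /greedy take_oversize ?size_c // filter_slots.
Qed.

End Greedy.
End EDF.

Theorem lemma4 (R : realFieldType) (N : nat) (f : R) (alpha beta : nat -> R)
    (c b s : seq nat) :
  0 < f ->
  (forall a, (0 < a <= N)%N -> 0 < alpha a) ->
  perm_eq c (iota 1 N) -> sorted (c_order alpha beta) c ->
  perm_eq b (iota 1 N) -> sorted (b_order alpha beta) b ->
  optimal_ordered_set N f alpha beta s ->
  optimal_ordered_set N f alpha beta (ojs N f alpha beta c b) /\
  size (ojs N f alpha beta c b) = size s.
Proof.
move=> f_gt0 alpha_gt0 c_iota c_sorted b_iota b_sorted [s_ord s_noout s_max].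
have b_beta : sorted (relpre beta <=%R) b.
  by apply: sub_sorted b_sorted => x y /orP[/ltW // | /andP[/eqP /= -> _]].
have c_alpha : sorted (relpre alpha <=%R) c.
  by apply: sub_sorted c_sorted => x y /orP[/ltW // | /andP[/eqP /= -> _]].
have c_perm : perm_eq c b by rewrite (perm_trans c_iota) // perm_sym.
rewrite (ojs_greedy beta f_gt0 alpha_gt0 b_iota c_perm).
set G := greedy N f alpha beta b c N.
have G_ord := ordered_set_filter b_iota G.
have G_noout := no_outage_filter b_iota (greedy_feasible N f alpha beta b c N).
have size_eq : size [seq z <- b | G z] = size s.
  apply/anti_leq; rewrite s_max // size_filter -(count_mem_ordered_set b_iota s_ord).
  apply: (greedy_optimal f_gt0 alpha_gt0 b_iota b_beta c_perm c_alpha).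
  exact: (edf_optimal f_gt0 alpha_gt0 b_iota b_beta).
split=> //; split=> // t t_ord t_noout; rewrite size_eq; exact: s_max.
Qed.
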